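(* Let $n,r\ge1$. Then, on $\mathbb{R}^n$: (i) $\mathcal{S}_r^-\Lambda^0=\mathcal{S}_r\Lambda^0$; (ii) $\mathcal{S}_r^-\Lambda^n=\mathcal{S}_{r-1}\Lambda^n$; (iii) for $0\le k\le n$, $\mathcal{S}_r^-\Lambda^k+d\,\mathcal{S}_{r+1}\Lambda^{k-1}=\mathcal{S}_r\Lambda^k$.
   Context: Fix $n\ge1$. For a multi-index $\alpha\in\mathbb{N}^n$ and a subset $\sigma=\{\sigma(1)<\dots<\sigma(k)\}\subset\{1,\dots,n\}$, the form monomial is $x^\alpha dx_\sigma:=x_1^{\alpha_1}\cdots x_n^{\alpha_n}\,dx_{\sigma(1)}\wedge\cdots\wedge dx_{\sigma(k)}$, of degree $|\alpha|$. $\mathcal{H}_r\Lambda^k(\mathbb{R}^n)$ is the span of form monomials with $|\alpha|=r$, $|\sigma|=k$ (it is $0$ if $r<0$ or $k\notin\{0,\dots,n\}$), and $\mathcal{P}_r\Lambda^k:=\bigoplus_{j=0}^r\mathcal{H}_j\Lambda^k$ ($=0$ if $r<0$). $d$ is the exterior derivative. The Koszul operator $\kappa$ is defined on monomials by $\kappa(x^\alpha dx_\sigma)=\sum_{i=1}^k(-1)^{i+1}x^\alpha x_{\sigma(i)}\,dx_{\sigma(1)}\wedge\cdots\wedge\widehat{dx_{\sigma(i)}}\wedge\cdots\wedge dx_{\sigma(k)}$ and extended linearly. The linear degree is $\mathrm{ldeg}(x^\alpha dx_\sigma):=\#\{i\notin\sigma:\alpha_i=1\}$, and $\mathcal{H}_{r,l}\Lambda^k$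 is the span of form monomials in $\mathcal{H}_r\Lambda^k$ with linear degree $\ge l$. Define $\mathcal{J}_r\Lambda^k:=\sum_{l\ge1}\kappa\,\mathcal{H}_{r+l-1,l}\Lambda^{k+1}$, the serendipity space $\mathcal{S}_r\Lambda^k:=\mathcal{P}_r\Lambda^k+\mathcal{J}_r\Lambda^k+d\,\mathcal{J}_{r+1}\Lambda^{k-1}$ (forms of degree $-1$ or $n+1$ are $0$), and for $r\ge1$ the trimmed serendipity space $\mathcal{S}_r^-\Lambda^k:=\mathcal{S}_{r-1}\Lambda^k+\kappa\,\mathcal{S}_{r-1}\Lambda^{k+1}$, all on $\mathbb{R}^n$. *)

(* Polynomial differential forms on R^n, following the paper:
   a form monomial x^alpha dx_sigma is a pair (alpha, sigma); a form is a finite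
   formal linear combination of monomials; d and kappa are defined on monomials
   and extended linearly; subspaces are predicates on coefficient functions. *)
From HB Require Import structures.
From mathcomp Require Import all_boot all_order all_algebra.
Set Implicit Arguments. Unset Strict Implicit. Unset Printing Implicit Defensive.
Import Order.TTheory GRing.Theory Num.Theory.
Local Open Scope ring_scope.

Section Forms.
Variable R : realFieldType.
Variable n : nat.

Definition mono := ({ffun 'I_n -> nat} * {set 'I_n})%type.
Definition lc := seq (R * mono).
Definition coef (f : lc) (m : mono) : R := \sum_(t <- f | t.2 == m) t.1.

Definition mdeg (m : mono) : nat := (\sum_(i < n) m.1 i)%N.
Definition fdeg (m : mono) : nat := #|m.2|.
Definition ldeg (m : mono) : nat := #|[set i | (i \notin m.2) && (m.1 i == 1%N)]|.

Definition sgn (j : 'I_n) (s : {set 'I_n}) : R := (-1) ^+ #|[set l in s | (l < j)%N]|.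
Definition incr (a : {ffun 'I_n -> nat}) (j : 'I_n) : {ffun 'I_n -> nat} :=
  [ffun i => (a i + (i == j))%N].
Definition decr (a : {ffun 'I_n -> nat}) (j : 'I_n) : {ffun 'I_n -> nat} :=
  [ffun i => (a i - (i == j))%N].

Definition dmono (m : mono) : lc :=
  [seq ((m.1 j)%:R * sgn j m.2, (decr m.1 j, j |: m.2)) | j <- enum 'I_n & j \notin m.2].
(* kappa (x^a dx_s) = sum_i (-1)^(i+1) x^a x_{s(i)} dx_{s \ s(i)} *)
Definition kmono (m : mono) : lc :=
  [seq (sgn j m.2, (incr m.1 j, m.2 :\ j)) | j <- enum 'I_n & j \in m.2].

Definition linext (L : mono -> lc) (f : lc) : lc :=
  flatten [seq [seq (t.1 * s.1, s.2) | s <- L t.2] | t <- f].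
Definition dlc := linext dmono.
Definition klc := linext kmono.

Definition space := (mono -> R) -> Prop.
Definition eqS (V W : space) := forall g, V g <-> W g.
Definition spanM (P : pred mono) : space :=
  fun g => exists f : lc, all (fun t => P t.2) f /\ coef f =1 g.
Definition img (L : lc -> lc) (V : space) : space :=
  fun g => exists f : lc, V (coef f) /\ coef (L f) =1 g.
Definition addS (V W : space) : space :=
  fun g => exists u v, V u /\ W v /\ forall m, g m = u m + v m.
Definition bigsumS (V : nat -> space) : space :=
  fun g => exists (L : nat) (v : nat -> mono -> R),
    (forall l, (0 < l < L)%N -> V l (v l)) /\
    forall m, g m = \sum_(1 <= l < L) v l m.

Definition Hs (r k : int) : space :=
  spanM (fun m => ((mdeg m)%:Z == r) && ((fdeg m)%:Z == k)).
Definition Ps (r k : int) : space :=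
  spanM (fun m => ((mdeg m)%:Z <= r) && ((fdeg m)%:Z == k)).
Definition Hrl (r : int) (l : nat) (k : int) : space :=
  spanM (fun m => [&& (mdeg m)%:Z == r, (fdeg m)%:Z == k & (l <= ldeg m)%N]).
Definition Js (r k : int) : space :=
  bigsumS (fun l => img klc (Hrl (r + l%:Z - 1) l (k + 1))).
Definition Ss (r k : int) : space :=
  addS (addS (Ps r k) (Js r k)) (img dlc (Js (r + 1) (k - 1))).
Definition Sms (r k : int) : space :=
  addS (Ss (r - 1) k) (img klc (Ss (r - 1) (k + 1))).

End Forms.

(* Everything rests on three identities for the exterior derivative d and the
   Koszul operator kappa: d d = 0, kappa kappa = 0, and the homotopy formula
   (kappa d + d kappa) w = (r + k) w for w in H_r Lambda^k.  For (iii), the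
   inclusion of the left side in S_r Lambda^k is degree bookkeeping, using
   d d = kappa kappa = 0 and kappa d J_r <= J_r.  Conversely, a monomial w of
   degree r is (kappa d w + d kappa w) / (r + k), with d w in P_(r-1) and
   kappa w in P_(r+1); an element w = kappa eta of J_r is kappa (d w) / (r + l + k),
   where d w lies in d J_r, a summand of S_(r-1) Lambda^(k+1).  Parts (i) and (ii)
   follow because forms of degree -1 and n+1 vanish. *)

From Pilot Require Import Defs.
From HB Require Import structures.
From mathcomp Require Import all_boot all_order all_algebra.
From mathcomp Require Import zify ring lra.
Import Order.TTheory GRing.Theory Num.Theory.
Local Open Scope ring_scope.

Section LinearCombinations.
Context {R : realFieldType} {n : nat}.
Local Notation mono := (mono n).
Local Notation lc := (lc R n).
Implicit Types (f : lc) (m : mono).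

Definition scale_lc (c : R) f : lc := [seq (c * t.1, t.2) | t <- f].

Lemma coef_lcE f m : coef f m = \sum_(t <- f) t.1 * (t.2 == m)%:R.
Proof.
rewrite /coef big_mkcond /=; apply: eq_bigr => t _.
by case: eqP => _; rewrite ?mulr1 ?mulr0.
Qed.

Lemma coef_nil m : coef ([::] : lc) m = 0.
Proof. by rewrite /coef big_nil. Qed.

Lemma coef_cat f1 f2 m : coef (f1 ++ f2) m = coef f1 m + coef f2 m.
Proof. by rewrite /coef big_cat. Qed.

Lemma coef_lc_cons t f m : coef (t :: f) m = t.1 * coef [:: (1, t.2)] m + coef f m.
Proof. by rewrite !coef_lcE !big_cons big_nil /= mul1r addr0. Qed.

Lemma coef_scale c f m : coef (scale_lc c f) m = c * coef f m.
Proof. by rewrite !coef_lcE big_map mulr_sumr; apply: eq_bigr => t _ /=; rewrite mulrA. Qed.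

Lemma sum_linext (M : mono -> lc) f (phi : mono -> R) :
  \sum_(s <- linext M f) s.1 * phi s.2 =
  \sum_(t <- f) t.1 * \sum_(u <- M t.2) u.1 * phi u.2.
Proof.
rewrite /linext big_flatten big_map; apply: eq_bigr => t _.
by rewrite big_map mulr_sumr; apply: eq_bigr => u _ /=; rewrite mulrA.
Qed.

Lemma coef_linext (M : mono -> lc) f m :
  coef (linext M f) m = \sum_(t <- f) t.1 * coef (M t.2) m.
Proof.
rewrite coef_lcE (sum_linext M f (fun x => (x == m)%:R)).
by apply: eq_bigr => t _; rewrite coef_lcE.
Qed.

Lemma coef_linext2 (M1 M2 : mono -> lc) f m :
  coef (linext M2 (linext M1 f)) m = \sum_(t <- f) t.1 * coef (linext M2 (M1 t.2)) m.
Proof.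
rewrite coef_linext (sum_linext M1 f (fun x => coef (M2 x) m)).
by apply: eq_bigr => t _; rewrite coef_linext.
Qed.

Lemma mem_linext (M : mono -> lc) f (t : R * mono) : t \in linext M f ->
  exists2 u : R * mono, u \in f & exists2 v : R * mono, v \in M u.2 & t.2 = v.2.
Proof.
by case/flattenP => s /mapP [u uf ->] /mapP [v vM ->]; exists u => //; exists v.
Qed.

Lemma sum_lc_coef f (phi : mono -> R) (s : seq mono) :
  uniq s -> {subset map snd f <= s} ->
  \sum_(t <- f) t.1 * phi t.2 = \sum_(u <- s) coef f u * phi u.
Proof.
move=> us fs.
under [RHS]eq_bigr => u _ do rewrite coef_lcE mulr_suml.
rewrite exchange_big /=; apply: eq_big_seq => t tf.
under eq_bigr => u _ do rewrite -mulrA.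
rewrite -mulr_sumr; congr (_ * _).
have : t.2 \in s by apply/fs/map_f.
elim: s us {fs} => [|y s IH] //= /andP [ys us]; rewrite in_cons big_cons.
case: (eqVneq t.2 y) => [->|nty /= ts]; last by rewrite mul0r add0r IH.
rewrite mul1r big1_seq ?addr0 // => u /andP [_ us'].
by case: eqVneq => [eu|_]; [move: ys; rewrite eu us'|rewrite mul0r].
Qed.

Lemma linext_coef_eq (M : mono -> lc) f1 f2 :
  coef f1 =1 coef f2 -> coef (linext M f1) =1 coef (linext M f2).
Proof.
move=> e m; rewrite !coef_lcE !(sum_linext M _ (fun x => (x == m)%:R)).
set s := undup (map snd (f1 ++ f2)).
set phi := fun x => \sum_(u <- M x) u.1 * (u.2 == m)%:R.
rewrite !(@sum_lc_coef _ phi s) ?undup_uniq //.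
- by apply: eq_bigr => u _; rewrite e.
- by move=> x xf; rewrite mem_undup map_cat mem_cat xf orbT.
- by move=> x xf; rewrite mem_undup map_cat mem_cat xf.
Qed.

(* [L] respects equality of coefficient functions, hence induces a linear map
   on forms. *)
Record lc_linear (L : lc -> lc) : Prop := LcLinear {
  lc_linear_coef : forall f1 f2, coef f1 =1 coef f2 -> coef (L f1) =1 coef (L f2);
  lc_linearD : forall f1 f2 m, coef (L (f1 ++ f2)) m = coef (L f1) m + coef (L f2) m;
  lc_linearZ : forall c f m, coef (L (scale_lc c f)) m = c * coef (L f) m;
  lc_linear0 : forall m, coef (L [::]) m = 0 }.
#[global] Arguments lc_linear_coef {L} _ {f1 f2}.
#[global] Arguments lc_linearD {L}.
#[global] Arguments lc_linearZ {L}.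
#[global] Arguments lc_linear0 {L}.

Lemma linext_linear (M : mono -> lc) : lc_linear (linext M).
Proof.
split.
- exact: linext_coef_eq.
- by move=> f1 f2 m; rewrite !coef_linext big_cat.
- move=> c f m; rewrite !coef_linext big_map mulr_sumr.
  by apply: eq_bigr => t _ /=; rewrite mulrA.
- by move=> m; rewrite coef_linext big_nil.
Qed.

Lemma comp_linear {L1 L2} : lc_linear L1 -> lc_linear L2 -> lc_linear (fun f => L1 (L2 f)).
Proof.
case=> w1 D1 Z1 O1 [w2 D2 Z2 O2]; split.
- by move=> f1 f2 e; apply/w1/w2.
- by move=> f1 f2 m; rewrite -D1; apply: w1 => x; rewrite D2 coef_cat.
- by move=> c f m; rewrite -Z1; apply: w1 => x; rewrite Z2 coef_scale.
- by move=> m; rewrite -(O1 m); apply: w1 => x; rewrite O2 coef_nil.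
Qed.

End LinearCombinations.

Section Subspaces.
Context {R : realFieldType} {n : nat}.
Local Notation mono := (mono n).
Local Notation lc := (lc R n).
Local Notation space := (Defs.space R n).
Implicit Types (f : lc) (m : mono) (L : lc -> lc) (U V W : space).

Definition subS V W := forall g, V g -> W g.
Definition maps_into L V W := forall f, V (coef f) -> W (coef (L f)).
Definition zeroS : space := fun g => g =1 (fun _ => 0).

(* The last field excludes coefficient functions that are not forms, i.e. not
   the coefficients of a finite linear combination. *)
Record subspace V : Prop := Subspace {
  subspace_eq : forall g1 g2, g1 =1 g2 -> V g1 -> V g2;
  subspace0 : V (fun _ => 0);
  subspaceD : forall g1 g2, V g1 -> V g2 -> V (fun m => g1 m + g2 m);
  subspaceZ : forall c g, V g -> V (fun m => c * g m);
  subspace_coef : forall g, V g -> exists f, coef f =1 g }.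
#[global] Arguments subspace_eq {V} _ {g1 g2}.
#[global] Arguments subspace0 {V}.
#[global] Arguments subspaceD {V} _ {g1 g2}.
#[global] Arguments subspaceZ {V} _ c {g}.
#[global] Arguments subspace_coef {V} _ {g}.

Lemma subS_refl {V} : subS V V.
Proof. by []. Qed.

Lemma subS_trans {U V W} : subS U V -> subS V W -> subS U W.
Proof. by move=> h1 h2 g /h1 /h2. Qed.

Lemma subspace_zeroS : subspace zeroS.
Proof.
split=> //.
- by move=> g1 g2 e h m; rewrite -e h.
- by move=> g1 g2 h1 h2 m; rewrite h1 h2 addr0.
- by move=> c g h m; rewrite h mulr0.
- by move=> g h; exists [::] => m; rewrite coef_nil h.
Qed.

Lemma subspace_spanM {P : pred mono} : subspace (spanM P).
Proof.
split.
- by move=> g1 g2 e [f [Pf ef]]; exists f; split=> // m; rewrite ef e.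
- by exists [::]; split=> // m; exact: coef_nil.
- move=> g1 g2 [f1 [P1 e1]] [f2 [P2 e2]]; exists (f1 ++ f2).
  by rewrite all_cat P1 P2; split=> // m; rewrite coef_cat e1 e2.
- move=> c g [f [Pf ef]]; exists (scale_lc c f).
  by rewrite all_map; split=> // m; rewrite coef_scale ef.
- by move=> g [f [_ ef]]; exists f.
Qed.

Lemma subspace_img {L V} : lc_linear L -> subspace V -> subspace (img L V).
Proof.
case=> Lcoef LD LZ L0 [Veq V0 VD VZ _]; split.
- by move=> g1 g2 e [f [Vf ef]]; exists f; split=> // m; rewrite ef e.
- by exists [::]; split=> //; apply: (Veq _ _ _ V0) => m; rewrite coef_nil.
- move=> g1 g2 [f1 [V1 e1]] [f2 [V2 e2]]; exists (f1 ++ f2); split.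
    by apply: (Veq _ _ _ (VD _ _ V1 V2)) => m; rewrite coef_cat.
  by move=> m; rewrite LD e1 e2.
- move=> c g [f [Vf ef]]; exists (scale_lc c f); split.
    by apply: (Veq _ _ _ (VZ c _ Vf)) => m; rewrite coef_scale.
  by move=> m; rewrite LZ ef.
- by move=> g [f [_ ef]]; exists (L f).
Qed.

Lemma subspace_addS {V W} : subspace V -> subspace W -> subspace (addS V W).
Proof.
case=> _ V0 VD VZ Vcoef [_ W0 WD WZ Wcoef]; split.
- by move=> g1 g2 e [u [v [Vu [Wv euv]]]]; exists u, v; split=> //; split=> // m; rewrite -e.
- by exists (fun _ => 0), (fun _ => 0); split=> //; split=> // m; rewrite addr0.
- move=> g1 g2 [u1 [v1 [Vu1 [Wv1 e1]]]] [u2 [v2 [Vu2 [Wv2 e2]]]].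
  exists (fun m => u1 m + u2 m), (fun m => v1 m + v2 m).
  by split; [exact: VD|split; [exact: WD|move=> m; rewrite e1 e2 addrACA]].
- move=> c g [u [v [Vu [Wv e]]]]; exists (fun m => c * u m), (fun m => c * v m).
  by split; [exact: VZ|split; [exact: WZ|move=> m; rewrite e mulrDr]].
- move=> g [u [v [Vu [Wv e]]]]; case: (Vcoef _ Vu) => f1 e1; case: (Wcoef _ Wv) => f2 e2.
  by exists (f1 ++ f2) => m; rewrite coef_cat e1 e2 e.
Qed.

Lemma partial_sums_closed {W : space} {v : nat -> mono -> R} {N} :
  W (fun _ => 0) -> (forall g1 g2, g1 =1 g2 -> W g1 -> W g2) ->
  (forall g1 g2, W g1 -> W g2 -> W (fun m => g1 m + g2 m)) ->
  (forall l, (0 < l < N)%N -> W (v l)) -> W (fun m => \sum_(1 <= l < N) v l m).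
Proof.
move=> W0 Weq WD Wv; elim: N Wv => [|[|N] IH] Wv.
- by apply: (Weq _ _ _ W0) => m; rewrite big_geq.
- by apply: (Weq _ _ _ W0) => m; rewrite big_geq.
apply: (Weq _ _ _ (WD _ _ (IH _) (Wv N.+1 _))) => [m||].
- by rewrite [RHS]big_nat_recr.
- by move=> l /andP [l0 lN]; apply: Wv; rewrite l0 ltnW.
- by rewrite ltnSn.
Qed.

Lemma sum_nat_truncate (F : nat -> R) N1 N : (N1 <= N)%N ->
  \sum_(1 <= l < N) (if (l < N1)%N then F l else 0) = \sum_(1 <= l < N1) F l.
Proof.
case: N1 => [|N1] hN; first by rewrite [RHS]big_geq //; apply: big1.
rewrite (@big_cat_nat _ _ _ N1.+1) //= [X in _ + X]big_nat_cond [X in _ + X]big1 ?addr0.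
  by apply: eq_big_nat => l /andP [_ ->].
by move=> l /andP [/andP [hl _] _]; rewrite ltnNge hl.
Qed.

Lemma subspace_bigsumS {V : nat -> space} :
  (forall l, subspace (V l)) -> subspace (bigsumS V).
Proof.
move=> sV; split.
- by move=> g1 g2 e [N [v [Vv ev]]]; exists N, v; split=> // m; rewrite -e.
- exists 0%N, (fun _ _ => 0); split; last by move=> m; rewrite big_geq.
  by move=> l /andP [_]; rewrite ltn0.
- move=> g1 g2 [N1 [v1 [Vv1 e1]]] [N2 [v2 [Vv2 e2]]].
  pose cut N (v : nat -> mono -> R) l m := if (l < N)%N then v l m else 0.
  have Vcut N v l : (forall j, (0 < j < N)%N -> V j (v j)) -> (0 < l)%N -> V l (cut N v l).
    move=> Vv l0; rewrite /cut; case: (ltnP l N) => lN; last exact: (subspace0 (sV l)).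
    by apply: Vv; rewrite l0.
  exists (maxn N1 N2), (fun l m => cut N1 v1 l m + cut N2 v2 l m); split.
    by move=> l /andP [l0 _]; apply: (subspaceD (sV l)); apply: Vcut.
  move=> m; rewrite big_split /= e1 e2.
  by rewrite !(sum_nat_truncate (fun l => _ l m)) ?leq_maxl ?leq_maxr.
- move=> c g [N [v [Vv e]]]; exists N, (fun l m => c * v l m); split.
    by move=> l hl; apply/(subspaceZ (sV l))/Vv.
  by move=> m; rewrite e mulr_sumr.
- move=> g [N [v [Vv e]]].
  pose coefS : space := fun g => exists f, coef f =1 g.
  have [f ef] : coefS (fun m => \sum_(1 <= l < N) v l m).
    apply: partial_sums_closed.
    + by exists [::] => m; rewrite coef_nil.
    + by move=> g1 g2 e12 [f ef]; exists f => m; rewrite ef e12.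
    + by move=> g1 g2 [f1 e1] [f2 e2]; exists (f1 ++ f2) => m; rewrite coef_cat e1 e2.
    + by move=> l hl; apply/(subspace_coef (sV l))/Vv.
  by exists f => m; rewrite ef e.
Qed.

Lemma subspace_sum_lc {W f} :
  subspace W -> (forall t, t \in f -> W (coef [:: (1, t.2)])) -> W (coef f).
Proof.
case=> Weq W0 WD WZ _; elim: f => [|t f IH] h.
  by apply: (Weq _ _ _ W0) => m; rewrite coef_nil.
apply: (Weq _ _ _ (WD _ _ (WZ t.1 _ (h t (mem_head _ _))) (IH _))).
  by move=> m; rewrite coef_lc_cons.
by move=> u uf; apply: h; rewrite in_cons uf orbT.
Qed.

Lemma spanM_sub {P : pred mono} {W} : subspace W ->
  (forall m, P m -> W (coef [:: (1, m)])) -> subS (spanM P) W.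
Proof.
move=> sW h g [f [Pf ef]]; apply: (subspace_eq sW ef).
by apply: subspace_sum_lc => // t tf; apply/h/(allP Pf).
Qed.

Lemma spanM1 {P : pred mono} {m} : P m -> spanM P (coef [:: ((1 : R), m)]).
Proof. by move=> Pm; exists [:: (1, m)]; rewrite /= Pm. Qed.

Lemma spanM_subS {P Q : pred mono} : subpred P Q -> subS (spanM P) (spanM Q).
Proof.
by move=> PQ; apply: spanM_sub => [|m /PQ]; [exact: subspace_spanM|exact: spanM1].
Qed.

Lemma maps_spanM {L} {P : pred mono} {W} : lc_linear L -> subspace W ->
  (forall m, P m -> W (coef (L [:: (1, m)]))) -> maps_into L (spanM P) W.
Proof.
case=> Lcoef LD LZ L0 [Weq W0 WD WZ _] h f [f' [Pf ef]].
apply: (Weq _ _ (Lcoef _ _ ef)).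
elim: f' Pf {ef} => [|[c x] f' IH] /= Pf.
  by apply: (Weq _ _ _ W0) => m; rewrite L0.
case/andP: Pf => Px Pf.
have -> : (c, x) :: f' = scale_lc c [:: (1, x)] ++ f' by rewrite /scale_lc /= mulr1.
by apply: (Weq _ _ _ (WD _ _ (WZ c _ (h x Px)) (IH Pf))) => m; rewrite LD LZ.
Qed.

Lemma img_sub {L V W} : subspace W -> maps_into L V W -> subS (img L V) W.
Proof. by move=> sW h g [f [Vf ef]]; exact: (subspace_eq sW ef (h f Vf)). Qed.

Lemma img_subS {L V W} : subS V W -> subS (img L V) (img L W).
Proof. by move=> VW g [f [Vf ef]]; exists f; split=> //; apply: VW. Qed.

Lemma maps_subl {L V V' W} : subS V V' -> maps_into L V' W -> maps_into L V W.
Proof. by move=> VV' h f /VV' /h. Qed.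

Lemma maps_subr {L V W W'} : maps_into L V W -> subS W W' -> maps_into L V W'.
Proof. by move=> h WW' f /h /WW'. Qed.

Lemma maps_addS {L V1 V2 W} : lc_linear L -> subspace V1 -> subspace V2 -> subspace W ->
  maps_into L V1 W -> maps_into L V2 W -> maps_into L (addS V1 V2) W.
Proof.
move=> lL sV1 sV2 sW h1 h2 f [u [v [Vu [Vv e]]]].
case: (subspace_coef sV1 Vu) => f1 e1; case: (subspace_coef sV2 Vv) => f2 e2.
have ef : coef (f1 ++ f2) =1 coef f by move=> m; rewrite coef_cat e1 e2 e.
apply: (subspace_eq sW (lc_linear_coef lL ef)).
apply: (subspace_eq sW _ (subspaceD sW (h1 f1 _) (h2 f2 _))).
- by move=> m; rewrite (lc_linearD lL).
- by apply: (subspace_eq sV1 _ Vu) => m; rewrite e1.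
- by apply: (subspace_eq sV2 _ Vv) => m; rewrite e2.
Qed.

Lemma maps_bigsumS {L} {V : nat -> space} {W} : lc_linear L ->
  (forall l, subspace (V l)) -> subspace W ->
  (forall l, (0 < l)%N -> maps_into L (V l) W) -> maps_into L (bigsumS V) W.
Proof.
move=> lL sV sW h f [N [v [Vv e]]].
pose T : space := fun g => exists f', coef f' =1 g /\ W (coef (L f')).
have [f' [ef' Wf']] : T (fun m => \sum_(1 <= l < N) v l m).
  apply: partial_sums_closed.
  - exists [::]; split; first exact: coef_nil.
    by apply: (subspace_eq sW _ (subspace0 sW)) => m; rewrite (lc_linear0 lL).
  - by move=> g1 g2 e12 [f' [ef' Wf']]; exists f'; split=> // m; rewrite ef' e12.
  - move=> g1 g2 [f1 [e1 W1]] [f2 [e2 W2]]; exists (f1 ++ f2); split.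
      by move=> m; rewrite coef_cat e1 e2.
    by apply: (subspace_eq sW _ (subspaceD sW W1 W2)) => m; rewrite (lc_linearD lL).
  - move=> l /andP [l0 lN]; have Vl : V l (v l) by apply: Vv; rewrite l0.
    have [f1 e1] := subspace_coef (sV l) Vl.
    exists f1; split=> //; apply: (h l l0).
    by apply: (subspace_eq (sV l) _ Vl) => m; rewrite e1.
have ef : coef f' =1 coef f by move=> m; rewrite ef' e.
exact: (subspace_eq sW (lc_linear_coef lL ef) Wf').
Qed.

Lemma maps_img {L1 L2 V W} : lc_linear L2 -> subspace W ->
  maps_into (fun f => L2 (L1 f)) V W -> maps_into L2 (img L1 V) W.
Proof.
by move=> lL2 sW h f [f0 [Vf0 ef0]]; exact: (subspace_eq sW (lc_linear_coef lL2 ef0) (h f0 Vf0)).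
Qed.

Lemma maps_zeroS {L W} : lc_linear L -> subspace W -> maps_into L zeroS W.
Proof.
move=> lL sW f f0; apply: (subspace_eq sW _ (subspace0 sW)) => m.
by rewrite -(lc_linear0 lL m); apply: (lc_linear_coef lL) => x; rewrite f0 coef_nil.
Qed.

Lemma addS_sub {V1 V2 W} : subspace W -> subS V1 W -> subS V2 W -> subS (addS V1 V2) W.
Proof.
move=> sW h1 h2 g [u [v [Vu [Vv e]]]].
by apply: (subspace_eq sW _ (subspaceD sW (h1 _ Vu) (h2 _ Vv))) => m; rewrite e.
Qed.

Lemma sub_addSl {V1 V2 W} : subspace V2 -> subS W V1 -> subS W (addS V1 V2).
Proof.
move=> sV2 h g Wg; exists g, (fun _ => 0).
by split; [exact: h|split; [exact: subspace0|move=> m; rewrite addr0]].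
Qed.

Lemma sub_addSr {V1 V2 W} : subspace V1 -> subS W V2 -> subS W (addS V1 V2).
Proof.
move=> sV1 h g Wg; exists (fun _ => 0), g.
by split; [exact: subspace0|split; [exact: h|move=> m; rewrite add0r]].
Qed.

Lemma bigsumS_sub {V : nat -> space} {W} : subspace W ->
  (forall l, (0 < l)%N -> subS (V l) W) -> subS (bigsumS V) W.
Proof.
move=> sW h g [N [v [Vv e]]]; apply: (subspace_eq sW (fun m => esym (e m))).
apply: partial_sums_closed; [exact: subspace0|exact: subspace_eq|exact: subspaceD|].
by move=> l /andP [l0 lN]; apply: (h l l0); apply: Vv; rewrite l0.
Qed.

Lemma sub_bigsumS {V : nat -> space} {l W} : (forall l, subspace (V l)) -> (0 < l)%N ->
  subS W (V l) -> subS W (bigsumS V).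
Proof.
move=> sV l0 h g Wg; exists l.+1, (fun j m => if j == l then g m else 0); split.
  by move=> j /andP [j0 _]; case: eqP => [->|_]; [exact: h|exact: (subspace0 (sV j))].
move=> m; rewrite big_nat_recr //= eqxx big_nat_cond big1 ?add0r //.
by move=> j /andP [/andP [_ hj] _]; rewrite (ltn_eqF hj).
Qed.

Lemma addS_zeroS {V X} : subspace V -> subspace X -> subS X zeroS -> eqS (addS V X) V.
Proof.
move=> sV sX X0 g; split; last exact: sub_addSl.
by case=> u [v [Vu [Xv e]]]; apply: (subspace_eq sV _ Vu) => m; rewrite e (X0 _ Xv m) addr0.
Qed.

End Subspaces.

Section Operators.
Context {R : realFieldType} {n : nat}.
Local Notation mono := (mono n).
Local Notation lc := (lc R n).
Local Notation sgn := (@sgn R n).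
Local Notation dm := (@dmono R n).
Local Notation km := (@kmono R n).
Local Notation dl := (@dlc R n).
Local Notation kl := (@klc R n).
Implicit Types (f : lc) (m : mono) (a : {ffun 'I_n -> nat}) (s : {set 'I_n}).

Lemma sgn_sq j s : sgn j s * sgn j s = 1.
Proof. by rewrite /Defs.sgn -exprMn mulrNN mulr1 expr1n. Qed.

Lemma sgnU1 i {j s} : j \notin s -> sgn i (j |: s) = (if (j < i)%N then -1 else 1) * sgn i s.
Proof.
move=> js; rewrite /Defs.sgn; case: ifP => ji.
  have -> : [set l in j |: s | (l < i)%N] = j |: [set l in s | (l < i)%N].
    by apply/setP => l; rewrite !inE; case: eqP => [->|] //=; rewrite ji.
  by rewrite cardsU1 inE (negbTE js) /= add1n exprS.
rewrite mul1r; congr (_ ^+ _); apply: eq_card => l; rewrite !inE.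
by case: eqP => [->|] //=; rewrite ji (negbTE js).
Qed.

Lemma sgnD1 {i} j {s} : i \in s -> sgn j s = (if (i < j)%N then -1 else 1) * sgn j (s :\ i).
Proof. by move=> hi; rewrite -{1}(setD1K hi) sgnU1 // setD11. Qed.

Lemma incr_decrC a i j : i != j -> incr (decr a j) i = decr (incr a i) j.
Proof.
move=> ij; apply/ffunP => x; rewrite !ffunE.
case: (eqVneq x i) => [xi|xi]; case: (eqVneq x j) => [xj|xj] //=; try lia.
by move: ij; rewrite -xi xj eqxx.
Qed.

Lemma incr_decrK a j : (0 < a j)%N -> incr (decr a j) j = a.
Proof. by move=> h; apply/ffunP => x; rewrite !ffunE; case: eqVneq => [->|] /=; lia. Qed.

Lemma decr_incrK a j : decr (incr a j) j = a.
Proof. by apply/ffunP => x; rewrite !ffunE; case: eqVneq => /=; lia. Qed.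

Lemma incrC a i j : incr (incr a i) j = incr (incr a j) i.
Proof. by apply/ffunP => x; rewrite !ffunE; lia. Qed.

Lemma decrC a i j : decr (decr a i) j = decr (decr a j) i.
Proof. by apply/ffunP => x; rewrite !ffunE; lia. Qed.

Lemma incr_neq a {i j} : j != i -> incr a i j = a j.
Proof. by move=> ji; rewrite ffunE (negbTE ji) addn0. Qed.

Lemma decr_neq a {i j} : j != i -> decr a i j = a j.
Proof. by move=> ji; rewrite ffunE (negbTE ji) subn0. Qed.

Lemma setU1D1 s i j : i != j -> (j |: s) :\ i = j |: (s :\ i).
Proof.
move=> ij; apply/setP => x; rewrite !inE.
by case: (eqVneq x j) => [->|] //=; rewrite eq_sym ij.
Qed.

Lemma setD1C s i j : (s :\ i) :\ j = (s :\ j) :\ i.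
Proof. by apply/setP => x; rewrite !inE; case: (x != i); case: (x != j). Qed.

Lemma sum_dmono (G : R * mono -> R) m : \sum_(t <- dm m) G t =
  \sum_(j | j \notin m.2) G ((m.1 j)%:R * sgn j m.2, (decr m.1 j, j |: m.2)).
Proof. by rewrite big_map big_filter big_enum_cond. Qed.

Lemma sum_kmono (G : R * mono -> R) m : \sum_(t <- km m) G t =
  \sum_(j | j \in m.2) G (sgn j m.2, (incr m.1 j, m.2 :\ j)).
Proof. by rewrite big_map big_filter big_enum_cond. Qed.

Lemma coef_dmono m m' : coef (dm m) m' =
  \sum_(j | j \notin m.2) (m.1 j)%:R * sgn j m.2 * ((decr m.1 j, j |: m.2) == m')%:R.
Proof. by rewrite coef_lcE (sum_dmono (fun t => t.1 * (t.2 == m')%:R)). Qed.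

Lemma coef_kmono m m' : coef (km m) m' =
  \sum_(j | j \in m.2) sgn j m.2 * ((incr m.1 j, m.2 :\ j) == m')%:R.
Proof. by rewrite coef_lcE (sum_kmono (fun t => t.1 * (t.2 == m')%:R)). Qed.

Lemma antisym_sum0 (I : finType) (G : I -> I -> R) : (forall i j, G i j = - G j i) ->
  \sum_i \sum_j G i j = 0.
Proof.
move=> GN; set S := \sum_i \sum_j G i j.
have : S = - S.
  rewrite {1}/S exchange_big /= /S -sumrN; apply: eq_bigr => j _.
  by rewrite -sumrN; apply: eq_bigr => i _; exact: GN.
by move=> e; lra.
Qed.

(* d o d and kappa o kappa vanish on a monomial: the two orders of removing
   (resp. adding) a pair of indices contribute with opposite signs. *)
Lemma kk_mono a s m' : coef (kl (km (a, s))) m' = 0.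
Proof.
rewrite /klc coef_linext (sum_kmono (fun t => t.1 * coef (km t.2) m')) /=.
pose G i j := if [&& i \in s, j \in s & j != i] then
  sgn i s * sgn j (s :\ i) * ((incr (incr a i) j, (s :\ i) :\ j) == m')%:R else 0.
transitivity (\sum_i \sum_j G i j); last first.
  apply: antisym_sum0 => i j; rewrite /G.
  case: (boolP (i \in s)) => hi; case: (boolP (j \in s)) => hj /=; rewrite ?oppr0 //.
  rewrite eq_sym; case: eqVneq => [_|ij]; rewrite ?oppr0 //=.
  rewrite incrC setD1C (@sgnD1 j i s hj) (@sgnD1 i j s hi).
  by case: ltngtP => h; [ring|ring|move: ij; rewrite (val_inj h) eqxx].
rewrite big_mkcond; apply: eq_bigr => i _; rewrite coef_kmono /=.
case: (boolP (i \in s)) => hi; last by rewrite big1 // => j _; rewrite /G (negbTE hi).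
rewrite mulr_sumr big_mkcond; apply: eq_bigr => j _; rewrite /G hi in_setD1 /=.
by case: (j \in s); rewrite ?andbF ?andbT //=; case: (j != i) => //; rewrite mulrA.
Qed.

Lemma dd_mono a s m' : coef (dl (dm (a, s))) m' = 0.
Proof.
rewrite /dlc coef_linext (sum_dmono (fun t => t.1 * coef (dm t.2) m')) /=.
pose G j i := if [&& j \notin s, i \notin s & i != j] then
  (a j)%:R * sgn j s * ((a i)%:R * sgn i (j |: s) *
  ((decr (decr a j) i, i |: (j |: s)) == m')%:R) else 0.
transitivity (\sum_j \sum_i G j i); last first.
  apply: antisym_sum0 => j i; rewrite /G.
  case: (boolP (j \in s)) => hj; case: (boolP (i \in s)) => hi /=; rewrite ?oppr0 //.
  rewrite eq_sym; case: eqVneq => [_|ij]; rewrite ?oppr0 //=.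
  rewrite decrC setUCA (@sgnU1 i j s hj) (@sgnU1 j i s hi).
  by case: ltngtP => h; [ring|ring|move: ij; rewrite (val_inj h) eqxx].
rewrite big_mkcond; apply: eq_bigr => j _; rewrite coef_dmono /=.
case: (boolP (j \in s)) => hj /=; first by rewrite big1 // => i _; rewrite /G hj.
rewrite mulr_sumr big_mkcond; apply: eq_bigr => i _; rewrite /G in_setU1 /=.
case: (eqVneq i j) => [->|ij] /=; first by rewrite !andbF.
by rewrite hj andbT; case: (i \in s) => //=; rewrite (@decr_neq a j i ij) mulrA.
Qed.

Lemma kk0 f : coef (kl (kl f)) =1 (fun _ => 0).
Proof. by move=> m'; rewrite /klc coef_linext2 big1 // => -[c [a s]] _; rewrite kk_mono mulr0. Qed.

Lemma dd0 f : coef (dl (dl f)) =1 (fun _ => 0).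
Proof. by move=> m'; rewrite /dlc coef_linext2 big1 // => -[c [a s]] _; rewrite dd_mono mulr0. Qed.

(* The off-diagonal terms of both [kappa d] and [d kappa] on [x^a dx_s] are,
   up to sign, these: the index [j] outside [s] enters, [i] in [s] leaves. *)
Definition cross_term a s m' i j : R :=
  sgn i s * sgn j (s :\ i) * (a j)%:R * ((incr (decr a j) i, j |: (s :\ i)) == m')%:R.

Lemma kd_mono a s m' : coef (kl (dm (a, s))) m' =
  (\sum_(j | j \notin s) a j)%:R * ((a, s) == m')%:R
  - \sum_(j | j \notin s) \sum_(i | i \in s) cross_term a s m' i j.
Proof.
rewrite /klc coef_linext (sum_dmono (fun t => t.1 * coef (km t.2) m')) /=.
rewrite natr_sum mulr_suml -sumrB; apply: eq_bigr => j js.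
rewrite coef_kmono /= (bigD1 j) ?setU11 //= setU1K // sgnU1 // ltnn mul1r.
rewrite (eq_bigl (fun i => i \in s)); last first.
  by move=> i; rewrite in_setU1; case: eqVneq => [->|] /=; [exact/esym/negbTE|rewrite andbT].
rewrite mulrDr mulr_sumr -sumrN; congr (_ + _).
  rewrite mulrA -[_ * sgn j s * sgn j s]mulrA sgn_sq mulr1.
  by case: (posnP (a j)) => [->|aj]; [rewrite !mul0r|rewrite incr_decrK].
apply: eq_bigr => i hi; have ij : i != j by apply: contraNneq js => <-.
rewrite /cross_term setU1D1 // (sgnU1 _ js) (sgnD1 j hi).
by case: ltngtP => h; [ring|ring|move: ij; rewrite (val_inj h) eqxx].
Qed.

Lemma dk_mono a s m' : coef (dl (km (a, s))) m' =
  (\sum_(i | i \in s) (a i + 1))%:R * ((a, s) == m')%:R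
  + \sum_(i | i \in s) \sum_(j | j \notin s) cross_term a s m' i j.
Proof.
rewrite /dlc coef_linext (sum_kmono (fun t => t.1 * coef (dm t.2) m')) /=.
rewrite natr_sum mulr_suml -big_split; apply: eq_bigr => i hi.
rewrite coef_dmono /= (bigD1 i) ?setD11 //=.
rewrite (eq_bigl (fun j => j \notin s)); last first.
  by move=> j; rewrite in_setD1; case: eqVneq => [->|] /=; [exact/esym/negbF|rewrite andbT].
rewrite mulrDr mulr_sumr; congr (_ + _).
  rewrite decr_incrK setD1K // ffunE eqxx [sgn i s](sgnD1 i hi) ltnn mul1r.
  by rewrite -[RHS]mul1r -(sgn_sq i (s :\ i)); change (a i + true)%N with (a i + 1)%N; ring.
apply: eq_bigr => j js; have ji : j != i by apply: contraNneq js => ->.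
by rewrite /cross_term (incr_neq _ ji) -incr_decrC 1?eq_sym //; ring.
Qed.

Lemma homotopy_mono a s m' : coef (kl (dm (a, s))) m' + coef (dl (km (a, s))) m' =
  (mdeg (a, s) + fdeg (a, s))%:R * ((a, s) == m')%:R.
Proof.
rewrite kd_mono dk_mono [X in _ - X]exchange_big /= addrACA addNr addr0 -mulrDl -natrD.
congr (_%:R * _); rewrite /mdeg /fdeg /= [in RHS](bigID (fun i => i \in s)) /=.
by rewrite big_split /= sum1_card addnCA addnA.
Qed.

Lemma homotopy {f} {z : int} : (forall t : R * mono, t \in f -> (mdeg t.2 + fdeg t.2)%:Z = z) ->
  forall m', coef (kl (dl f)) m' + coef (dl (kl f)) m' = z%:~R * coef f m'.
Proof.
move=> fz m'; rewrite /klc /dlc !coef_linext2 -big_split coef_lcE mulr_sumr.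
apply: eq_big_seq => -[c [a s]] tf /=.
by rewrite -mulrDr homotopy_mono -(fz _ tf) /= mulrCA.
Qed.

End Operators.

Section Serendipity.
Context {R : realFieldType} {n : nat}.
Local Notation mono := (mono n).
Local Notation lc := (lc R n).
Local Notation space := (Defs.space R n).
Local Notation dm := (@dmono R n).
Local Notation km := (@kmono R n).
Local Notation dl := (@dlc R n).
Local Notation kl := (@klc R n).
Local Notation zeroS := (@zeroS R n).
Local Notation Ps := (@Ps R n).
Local Notation Hrl := (@Hrl R n).
Local Notation Js := (@Js R n).
Local Notation Ss := (@Ss R n).
Local Notation Sms := (@Sms R n).
Implicit Types (f : lc) (m : mono) (r k : int).

Lemma dmono_deg m (t : R * mono) : t \in dm m -> t.1 != 0 ->
  (mdeg t.2).+1 = mdeg m /\ fdeg t.2 = (fdeg m).+1.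
Proof.
case: m => a s /mapP [j]; rewrite mem_filter => /andP [js _] -> /=.
rewrite mulf_eq0 negb_or => /andP [aj _].
have aj0 : (0 < a j)%N by rewrite lt0n; apply: contra aj => /eqP ->.
split; last by rewrite /fdeg /= cardsU1 js.
rewrite /mdeg /= (bigD1 j) //= [in RHS](bigD1 j) //= ffunE eqxx.
rewrite (eq_bigr (fun i => a i)) => [|i ij]; last by rewrite decr_neq.
by rewrite subn1 -addSn prednK.
Qed.

Lemma kmono_deg m (t : R * mono) : t \in km m ->
  mdeg t.2 = (mdeg m).+1 /\ (fdeg t.2).+1 = fdeg m.
Proof.
case: m => a s /mapP [j]; rewrite mem_filter => /andP [js _] -> /=.
split; last by rewrite /fdeg /= [in RHS](cardsD1 j s) js.
rewrite /mdeg /= (bigD1 j) //= [in RHS](bigD1 j) //= ffunE eqxx.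
rewrite (eq_bigr (fun i => a i)) => [|i ij]; last by rewrite incr_neq.
by rewrite addn1 addSn.
Qed.

Lemma spanM_coef {f} {Q : pred mono} :
  (forall t : R * mono, t \in f -> t.1 != 0 -> Q t.2) -> spanM Q (coef f).
Proof.
move=> fQ; exists (filter (fun t => t.1 != 0) f); split.
  by apply/allP => t; rewrite mem_filter => /andP [nz tf]; apply: fQ.
move=> m; rewrite !coef_lcE big_filter big_mkcond /=.
by apply: eq_bigr => t _; case: eqVneq => [->|] //=; rewrite mul0r.
Qed.

Lemma maps_linext_spanM {M : mono -> lc} {P Q : pred mono} :
  (forall m, P m -> forall t : R * mono, t \in M m -> t.1 != 0 -> Q t.2) ->
  maps_into (linext M) (spanM P) (spanM Q).
Proof.
move=> MPQ; apply: maps_spanM => [||m Pm]; [exact: linext_linear|exact: subspace_spanM|].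
apply: (subspace_eq subspace_spanM _ (spanM_coef (MPQ m Pm))) => x.
by rewrite coef_linext big_seq1 mul1r.
Qed.

Lemma subspace_Jterm r k l : subspace (img kl (Hrl (r + l%:Z - 1) l (k + 1))).
Proof. exact/subspace_img/subspace_spanM/linext_linear. Qed.

Lemma subspace_Js r k : subspace (Js r k).
Proof. exact: subspace_bigsumS (subspace_Jterm r k). Qed.

Lemma subspace_PJs r k : subspace (addS (Ps r k) (Js r k)).
Proof. exact/subspace_addS/subspace_Js/subspace_spanM. Qed.

Lemma subspace_dJs r k : subspace (img dl (Js r k)).
Proof. exact/subspace_img/subspace_Js/linext_linear. Qed.

Lemma subspace_Ss r k : subspace (Ss r k).
Proof. exact/subspace_addS/subspace_dJs/subspace_PJs. Qed.

Lemma subspace_linext_Ss (M : mono -> lc) r k : subspace (img (linext M) (Ss r k)).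
Proof. exact/subspace_img/subspace_Ss/linext_linear. Qed.

Lemma subspace_Sms r k : subspace (Sms r k).
Proof. exact/subspace_addS/subspace_linext_Ss/subspace_Ss. Qed.

Lemma Ps_zero r k : k < 0 \/ n%:Z < k -> subS (Ps r k) zeroS.
Proof.
move=> hk; apply: spanM_sub => [|m /andP [_ /eqP mk]]; first exact: subspace_zeroS.
have := max_card m.2; rewrite card_ord /fdeg in mk *; case: hk; lia.
Qed.

Lemma Js_zero r k : k < 0 \/ n%:Z <= k -> subS (Js r k) zeroS.
Proof.
move=> hk; apply: bigsumS_sub => [|l _]; first exact: subspace_zeroS.
apply: img_sub; first exact: subspace_zeroS.
apply: maps_spanM => [||m /and3P [_ /eqP mk _] x]; [exact: linext_linear|exact: subspace_zeroS|].
rewrite coef_linext big_seq1 mul1r coef_kmono /=.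
have := max_card m.2; rewrite card_ord /fdeg in mk *; case: hk => hk; last lia.
have /cards0_eq -> : #|m.2| = 0%N by lia.
by rewrite big_pred0 // => i; rewrite in_set0.
Qed.

Lemma img_sub_zeroS {L : lc -> lc} {V : space} :
  lc_linear L -> subS V zeroS -> subS (img L V) zeroS.
Proof.
move=> lL V0; apply: img_sub; first exact: subspace_zeroS.
exact: maps_subl V0 (maps_zeroS lL subspace_zeroS).
Qed.

Lemma Ss_zero r k : k < 0 \/ n%:Z < k -> subS (Ss r k) zeroS.
Proof.
move=> hk; have Jk r' k' : k' = k \/ k' = k - 1 -> subS (Js r' k') zeroS.
  by move=> ek; apply: Js_zero; case: hk; case: ek => ->; lia.
apply: addS_sub; first exact: subspace_zeroS.
  apply: addS_sub; [exact: subspace_zeroS|exact: Ps_zero|exact: Jk (or_introl erefl)].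
exact: img_sub_zeroS (linext_linear _) (Jk _ _ (or_intror erefl)).
Qed.

Lemma maps_kk (V W : space) : subspace W -> maps_into (fun f => kl (kl f)) V W.
Proof. by move=> sW f _; apply: (subspace_eq sW _ (subspace0 sW)) => x; rewrite kk0. Qed.

Lemma maps_dd (V W : space) : subspace W -> maps_into (fun f => dl (dl f)) V W.
Proof. by move=> sW f _; apply: (subspace_eq sW _ (subspace0 sW)) => x; rewrite dd0. Qed.

Lemma coef_linext_zero {M : mono -> lc} {f} :
  coef f =1 (fun _ => 0) -> coef (linext M f) =1 (fun _ => 0).
Proof.
move=> f0 x; rewrite (linext_coef_eq M f [::]) ?coef_linext ?big_nil // => y.
by rewrite f0 coef_nil.
Qed.

(* The summand [l = 1] of [J_(r-1)] lands in [P_r]; the summand [l > 1] is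
   contained in the summand [l - 1] of [J_r]. *)
Lemma Js_pred_sub r k : subS (Js (r - 1) k) (addS (Ps r k) (Js r k)).
Proof.
apply: bigsumS_sub => [|l l0]; first exact: subspace_PJs.
have [->|l1] := eqVneq l 1%N.
  apply: sub_addSl; first exact: subspace_Js.
  apply: img_sub; first exact: subspace_spanM.
  apply: maps_linext_spanM => m /and3P [/eqP mr /eqP mk _] t /kmono_deg [tr tk] _.
  by apply/andP; split; [|apply/eqP]; lia.
apply: sub_addSr; first exact: subspace_spanM.
apply: (sub_bigsumS (l := l.-1)); [exact: subspace_Jterm|lia|].
apply/img_subS/spanM_subS => m /and3P [/eqP mr /eqP mk ml].
by apply/and3P; split; [apply/eqP; lia|apply/eqP; lia|lia].
Qed.

(* On [kappa w] with [w] homogeneous, [kappa d] acts as multiplication by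
   [r + k], since [d kappa (kappa w) = 0]. *)
Lemma kd_Js r k : maps_into (fun f => kl (dl f)) (Js r k) (Js r k).
Proof.
have lkd : lc_linear (fun f => kl (dl f)) by apply: comp_linear; exact: linext_linear.
apply: maps_bigsumS => [|||l l0]; [exact: lkd|exact: subspace_Jterm|exact: subspace_Js|].
apply: maps_img; [exact: lkd|exact: subspace_Js|].
apply: maps_spanM => [||m Pm]; [exact: comp_linear lkd (linext_linear _)|exact: subspace_Js|].
set F := kl [:: (1, m)].
have Fdeg (t : R * mono) : t \in F -> (mdeg t.2 + fdeg t.2)%:Z = (mdeg m + fdeg m)%:Z.
  by case/mem_linext => u; rewrite mem_seq1 => /eqP -> [v /kmono_deg /= [tm tf] ->]; lia.
have JF : Js r k (coef F).
  apply: (sub_bigsumS (subspace_Jterm r k) l0 subS_refl).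
  by exists [:: (1, m)]; split=> //; exact: spanM1.
apply: (subspace_eq (subspace_Js r k) _ (subspaceZ (subspace_Js r k) (mdeg m + fdeg m)%:R JF)) => x.
by have := homotopy Fdeg x; rewrite (coef_linext_zero (kk0 _)) addr0 -pmulrn => ->.
Qed.

Lemma PJs_sub_Ss r k : subS (addS (Ps r k) (Js r k)) (Ss r k).
Proof. exact: sub_addSl (subspace_dJs (r + 1) (k - 1)) subS_refl. Qed.

Lemma Ps_sub_Ss r k : subS (Ps r k) (Ss r k).
Proof. exact: subS_trans (sub_addSl (subspace_Js r k) subS_refl) (PJs_sub_Ss r k). Qed.

Lemma Js_sub_Ss r k : subS (Js r k) (Ss r k).
Proof. exact: subS_trans (sub_addSr subspace_spanM subS_refl) (PJs_sub_Ss r k). Qed.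

Lemma d_Ps r k : maps_into dl (Ps (r + 1) (k - 1)) (Ps r k).
Proof.
apply: maps_linext_spanM => m /andP [mr /eqP mk] t /dmono_deg tdeg /tdeg [tm tk].
by apply/andP; split; [|apply/eqP]; lia.
Qed.

Lemma k_Ps r k : maps_into kl (Ps (r - 1) (k + 1)) (Ps r k).
Proof.
apply: maps_linext_spanM => m /andP [mr /eqP mk] t /kmono_deg [tm tk] _.
by apply/andP; split; [|apply/eqP]; lia.
Qed.

Lemma d_PJs_sub_Ss r k :
  maps_into dl (addS (Ps (r + 1) (k - 1)) (Js (r + 1) (k - 1))) (Ss r k).
Proof.
have sS := subspace_Ss r k.
apply: maps_addS; [exact: linext_linear|exact: subspace_spanM|exact: subspace_Js|exact: sS| |].
  exact: maps_subr (d_Ps r k) (Ps_sub_Ss r k).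
by move=> f Jf; apply: (sub_addSr (subspace_PJs r k) subS_refl); exists f.
Qed.

Lemma Ss_pred_sub_Ss r k : subS (Ss (r - 1) k) (Ss r k).
Proof.
apply: addS_sub; first exact: subspace_Ss.
  apply: addS_sub; first exact: subspace_Ss.
    apply: subS_trans (spanM_subS _) (Ps_sub_Ss r k) => m /andP [mr ->].
    by rewrite andbT; lia.
  exact: subS_trans (Js_pred_sub r k) (PJs_sub_Ss r k).
rewrite subrK; apply: img_sub; first exact: subspace_Ss.
by apply: maps_subl (d_PJs_sub_Ss r k); have := Js_pred_sub (r + 1) (k - 1); rewrite addrK.
Qed.

Lemma kSs_pred_sub_Ss r k : subS (img kl (Ss (r - 1) (k + 1))) (Ss r k).
Proof.
have sS := subspace_Ss r k.
apply: img_sub => //.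
apply: maps_addS; [exact: linext_linear|exact: subspace_PJs|exact: subspace_dJs|exact: sS| |].
  apply: maps_addS; [exact: linext_linear|exact: subspace_spanM|exact: subspace_Js|exact: sS| |].
    exact: maps_subr (k_Ps r k) (Ps_sub_Ss r k).
  apply: maps_bigsumS => [|||l _]; [exact: linext_linear|exact: subspace_Jterm|exact: sS|].
  by apply: maps_img; [exact: linext_linear|exact: sS|exact: maps_kk].
rewrite subrK addrK; apply: maps_img; [exact: linext_linear|exact: sS|].
exact: maps_subr (kd_Js r k) (Js_sub_Ss r k).
Qed.

Lemma dSs_succ_sub_Ss r k : subS (img dl (Ss (r + 1) (k - 1))) (Ss r k).
Proof.
have sS := subspace_Ss r k.
apply: img_sub => //.
apply: maps_addS; [exact: linext_linear|exact: subspace_PJs|exact: subspace_dJs|exact: sS| |].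
  exact: d_PJs_sub_Ss.
by apply: maps_img; [exact: linext_linear|exact: sS|exact: maps_dd].
Qed.

Lemma Sms_dSs_sub_Ss r k : subS (addS (Sms r k) (img dl (Ss (r + 1) (k - 1)))) (Ss r k).
Proof.
have sS := subspace_Ss r k.
apply: addS_sub => //; last exact: dSs_succ_sub_Ss.
by apply: addS_sub => //; [exact: Ss_pred_sub_Ss|exact: kSs_pred_sub_Ss].
Qed.

Lemma Ps_sub_Sms_dSs r k : 1 <= r -> 0 <= k ->
  subS (Ps r k) (addS (Sms r k) (img dl (Ss (r + 1) (k - 1)))).
Proof.
move=> r1 k0; set L := addS (Sms r k) _.
have sL : subspace L by exact/subspace_addS/subspace_linext_Ss/subspace_Sms.
have Ss_sub : subS (Ss (r - 1) k) L.
  exact: sub_addSl (subspace_linext_Ss _ _ _) (sub_addSl (subspace_linext_Ss _ _ _) subS_refl).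
apply: spanM_sub => // m /andP [mr /eqP mk].
have [mr1|mr1] := boolP ((mdeg m)%:Z <= r - 1).
  by apply/Ss_sub/Ps_sub_Ss/spanM1; rewrite mr1 mk eqxx.
set F : lc := [:: (1, m)].
have Fm : spanM (pred1 m) (coef F) by apply: spanM1; rewrite /= eqxx.
have kdF : L (coef (kl (dl F))).
  apply: (sub_addSl (subspace_linext_Ss _ _ _) (sub_addSr (subspace_Ss _ _) subS_refl)).
  exists (dl F); split=> //; apply/Ps_sub_Ss/(maps_linext_spanM _ _ Fm).
  move=> _ /eqP -> t /dmono_deg tdeg /tdeg [tm tk].
  by apply/andP; split; [|apply/eqP]; lia.
have dkF : L (coef (dl (kl F))).
  apply: (sub_addSr (subspace_Sms r k) subS_refl).
  exists (kl F); split=> //; apply/Ps_sub_Ss/(maps_linext_spanM _ _ Fm).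
  move=> _ /eqP -> t /kmono_deg [tm tk] _.
  by apply/andP; split; [|apply/eqP]; lia.
have Fdeg (t : R * mono) : t \in F -> (mdeg t.2 + fdeg t.2)%:Z = (mdeg m + fdeg m)%:Z.
  by rewrite mem_seq1 => /eqP ->.
have z0 : ((mdeg m + fdeg m)%:R : R) != 0 by rewrite pnatr_eq0; lia.
apply: (subspace_eq sL _ (subspaceZ sL (mdeg m + fdeg m)%:R^-1 (subspaceD sL kdF dkF))) => x.
by rewrite (homotopy Fdeg) -pmulrn mulrA mulVf // mul1r.
Qed.

(* An element [w = kappa eta] of [J_r] satisfies [kappa d w = (r + l + k) w]
   and [d w] lies in the summand [d J_r] of [S_(r-1) Lambda^(k+1)]. *)
Lemma Js_sub_kSs r k : 1 <= r -> 0 <= k -> subS (Js r k) (img kl (Ss (r - 1) (k + 1))).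
Proof.
move=> r1 k0; apply: bigsumS_sub => [|l l0 g [f [[h [Ph eh]] ef]]].
  exact: subspace_linext_Ss.
set F := kl h; set z := r + l%:Z + k.
have Fdeg (t : R * mono) : t \in F -> (mdeg t.2 + fdeg t.2)%:Z = z.
  case/mem_linext => u uh [v /kmono_deg [tm tk] ->].
  by have /and3P [/eqP um /eqP uk _] := allP Ph u uh; rewrite /z; lia.
have dF : Ss (r - 1) (k + 1) (coef (dl F)).
  apply: (sub_addSr (subspace_PJs _ _) subS_refl); rewrite subrK addrK.
  exists F; split=> //; apply: (sub_bigsumS (subspace_Jterm r k) l0 subS_refl).
  by exists h; split=> //; exists h.
have z0 : (z%:~R : R) != 0 by rewrite intr_eq0 /z; lia.
exists (scale_lc z%:~R^-1 (dl F)); split.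
  apply: (subspace_eq (subspace_Ss _ _) _ (subspaceZ (subspace_Ss _ _) _ dF)) => x.
  by rewrite coef_scale.
move=> x; rewrite (lc_linearZ (linext_linear _)) -ef -(linext_coef_eq _ _ _ eh x) -/F.
have := homotopy Fdeg x; rewrite (coef_linext_zero (kk0 h)) addr0 => ->.
by rewrite mulrA mulVf // mul1r.
Qed.

Lemma Ss_sub_Sms_dSs r k : 1 <= r -> 0 <= k ->
  subS (Ss r k) (addS (Sms r k) (img dl (Ss (r + 1) (k - 1)))).
Proof.
move=> r1 k0; have sL : subspace (addS (Sms r k) (img dl (Ss (r + 1) (k - 1)))).
  exact/subspace_addS/subspace_linext_Ss/subspace_Sms.
apply: addS_sub => //; first apply: addS_sub => //.
- exact: Ps_sub_Sms_dSs.
- apply: subS_trans (Js_sub_kSs _ _ r1 k0) _.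
  exact: sub_addSl (subspace_linext_Ss _ _ _) (sub_addSr (subspace_Ss _ _) subS_refl).
- exact: sub_addSr (subspace_Sms r k) (img_subS (Js_sub_Ss _ _)).
Qed.

Lemma Sms_dSs_eq_Ss r k : 1 <= r -> 0 <= k ->
  eqS (addS (Sms r k) (img dl (Ss (r + 1) (k - 1)))) (Ss r k).
Proof. by move=> r1 k0 g; split; [exact: Sms_dSs_sub_Ss|exact: Ss_sub_Sms_dSs]. Qed.

End Serendipity.

Theorem mainTheorem4 (R : realFieldType) (n r : nat) (hn : (1 <= n)%N) (hr : (1 <= r)%N) :
  eqS (@Sms R n r%:Z 0) (@Ss R n r%:Z 0) /\
  eqS (@Sms R n r%:Z n%:Z) (@Ss R n (r%:Z - 1) n%:Z) /\
  (forall k : nat, (k <= n)%N ->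
     eqS (addS (@Sms R n r%:Z k%:Z) (img (@dlc R n) (@Ss R n (r%:Z + 1) (k%:Z - 1))))
         (@Ss R n r%:Z k%:Z)).
Proof.
have Sms_dSs k : eqS (addS (@Sms R n r%:Z k%:Z) (img (@dlc R n) (Ss (r%:Z + 1) (k%:Z - 1))))
                     (Ss r%:Z k%:Z).
  by apply: Sms_dSs_eq_Ss; lia.
split; [|split=> [|k _]; last exact: Sms_dSs].
- have dS0 : subS (img (@dlc R n) (@Ss R n (r%:Z + 1) (0%N%:Z - 1))) zeroS.
    by apply/img_sub_zeroS/Ss_zero; [exact: linext_linear|left].
  have := addS_zeroS (subspace_Sms r%:Z 0) (subspace_linext_Ss _ _ _) dS0.
  by move=> e g; have := Sms_dSs 0%N g; have := e g; tauto.
- apply: addS_zeroS (subspace_Ss _ _) (subspace_linext_Ss _ _ _) _.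
  by apply/img_sub_zeroS/Ss_zero; [exact: linext_linear|right; lia].
Qed.
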